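(* Let $n>m=0$, $d\ge1$, $a\in\mathbb{C}^\times$, and $f_a(x_2,\dots,x_n)=\sum_{i=2}^nx_i^d+a/\prod_{i=2}^nx_i^d$. Then: (1) $f_a$ is convenient, i.e. the origin lies in the interior of $\Delta(f_a)$; (2) $\Delta(f_a)$ is the set of $(u_2,\dots,u_n)\in\mathbb{R}^{n-1}$ satisfying $h_{n+1}:=\sum_{i=2}^nu_i\le d$ and $h_{i_0}:=\sum_{i=2}^nu_i-n\,u_{i_0}\le d$ for $2\le i_0\le n$; (3) $f_a$ is non-degenerate with respect to $\Delta(f_a)$.
   Context: For a Laurent polynomial $g=\sum_\tau c(\tau)z^\tau$ in $N$ variables, $\mathrm{Supp}(g)=\{\tau:c(\tau)\ne0\}$, the Newton polytope $\Delta(g)$ is the convex hull of $\mathrm{Supp}(g)\cup\{0\}$ in $\mathbb{R}^N$, and $g$ is non-degenerate with respect to $\Delta(g)$ if for each face $\sigma$ of $\Delta(g)$ not containing $0$, $g_\sigma=\sum_{\tau\in\sigma\cap\mathbb{Z}^N}c(\tau)z^\tau$ has no critical point in $(\mathbb{C}^\times)^N$. A monomial $\prod x_i^{u_i}$ is identified with the lattice point $(u_2,\dots,u_n)$. *)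

From HB Require Import structures.
From mathcomp Require Import all_boot all_order all_algebra.
From mathcomp Require Import all_classical all_reals all_analysis.
From mathcomp Require Import complex.
Set Implicit Arguments. Unset Strict Implicit. Unset Printing Implicit Defensive.
Import Order.TTheory GRing.Theory Num.Theory.
Import numFieldTopology.Exports numFieldNormedType.Exports.
Local Open Scope ring_scope.
Local Open Scope classical_set_scope.

Section Laurent.
Variables (R : realType) (N : nat).
Local Notation C := (complex R).

Definition expo := 'rV[int]_N.

(* A Laurent polynomial g = sum_tau c(tau) z^tau : coefficient function with
   finite support, given with a sequence containing the support. *)
Record laurent := Laurent {
  lcoef : expo -> C;
  lsupp : seq expo;
  lsuppP : forall tau, lcoef tau != 0 -> tau \in lsupp }.

Definition Supp (g : laurent) : seq expo :=
  [seq tau <- undup (lsupp g) | lcoef g tau != 0].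

Definition toR (tau : expo) : 'rV[R]_N := map_mx (fun k : int => k%:~R) tau.

Definition conv (s : seq 'rV[R]_N) : set 'rV[R]_N :=
  [set u | exists lam : 'I_(size s) -> R,
      (forall k, 0 <= lam k) /\ \sum_k lam k = 1 /\
      u = \sum_k lam k *: s`_(nat_of_ord k)].

Definition Newton (g : laurent) : set 'rV[R]_N :=
  conv (0 :: [seq toR tau | tau <- Supp g]).

Definition convenient (g : laurent) : Prop := (interior (Newton g)) 0.

Definition dotR (w u : 'rV[R]_N) : R := \sum_i w ord0 i * u ord0 i.

Definition is_face (P sigma : set 'rV[R]_N) : Prop :=
  exists w : 'rV[R]_N,
    sigma = [set u | P u /\ forall v, P v -> dotR w v <= dotR w u].

Definition lrestr_coef (g : laurent) (sigma : set 'rV[R]_N) (tau : expo) : C :=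
  if `[< sigma (toR tau) >] then lcoef g tau else 0.

Lemma lrestr_suppP (g : laurent) (sigma : set 'rV[R]_N) tau :
  lrestr_coef g sigma tau != 0 -> tau \in lsupp g.
Proof.
rewrite /lrestr_coef; case: ifP => _; last by rewrite eqxx.
exact: lsuppP.
Qed.

Definition lrestr (g : laurent) (sigma : set 'rV[R]_N) : laurent :=
  Laurent (@lrestr_suppP g sigma).

Definition mono (tau : expo) (z : 'rV[C]_N) : C := \prod_i z ord0 i ^ tau ord0 i.

Definition unitE (j : 'I_N) : expo := delta_mx ord0 j.

(* value at z of the partial derivative d g / d z_j  (d z^tau/dz_j = tau_j z^(tau-e_j)) *)
Definition dpartial (g : laurent) (j : 'I_N) (z : 'rV[C]_N) : C :=
  \sum_(tau <- undup (lsupp g)) lcoef g tau * (tau ord0 j)%:~R * mono (tau - unitE j) z.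

Definition torus_critical (g : laurent) (z : 'rV[C]_N) : Prop :=
  (forall i, z ord0 i != 0) /\ forall j, dpartial g j z = 0.

Definition nondegenerateN (g : laurent) : Prop :=
  forall sigma, is_face (Newton g) sigma -> ~ sigma 0 ->
    ~ exists z, torus_critical (lrestr g sigma) z.

End Laurent.

(* f_a(x_2,...,x_n) = sum_{i=2}^n x_i^d + a / prod_{i=2}^n x_i^d ;
   variables x_2..x_n are indexed by 'I_(n.-1) (index i <-> x_{i+2}). *)
Section Fa.
Variables (R : realType) (n d : nat) (a : complex R).
Local Notation N := n.-1.

Definition fa_coef (tau : expo N) : complex R :=
  (if tau == const_mx (- (d%:Z)) then a else 0)
  + \sum_(i < N) (if tau == (d%:Z) *: unitE i then 1 else 0).

Lemma fa_suppP tau : fa_coef tau != 0 ->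
  tau \in const_mx (- (d%:Z)) :: [seq (d%:Z) *: unitE i | i <- enum 'I_N].
Proof.
rewrite /fa_coef in_cons.
have [->|_] := eqVneq tau (const_mx (- (d%:Z))); first by [].

rewrite add0r /= => H; apply/mapP.
have : [exists i : 'I_N, (if tau == (d%:Z) *: unitE i then 1 else 0 : complex R) != 0].
  apply: contraR H => /existsPn Hn.
  by rewrite big1 // => i _; apply/eqP; rewrite -[_ == 0]negbK Hn.
case/existsP => i Hi; exists i; first by rewrite mem_enum.
by move: Hi; have [//|_] := eqVneq tau ((d%:Z) *: unitE i); rewrite eqxx.
Qed.

Definition fa : laurent R N := Laurent fa_suppP.
End Fa.

From Pilot Require Import Defs.
From HB Require Import structures.
From mathcomp Require Import all_boot all_order all_algebra.
From mathcomp Require Import all_classical all_reals all_analysis.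
From mathcomp Require Import complex.
From mathcomp Require Import ring lra.
Import Order.TTheory GRing.Theory Num.Theory.
Import numFieldTopology.Exports numFieldNormedType.Exports.
Local Open Scope ring_scope.
Local Open Scope classical_set_scope.
Set Implicit Arguments. Unset Strict Implicit. Unset Printing Implicit Defensive.

(* The support of f_a consists of the pole -d(1,...,1) and the points d e_i, so
   Delta(f_a) is the simplex they span, which contains the origin. Every vertex
   satisfies the n linear inequalities; conversely a point u satisfying them is
   a subconvex combination of the vertices, with weight t/d on the pole and
   (u_i + t)/d on d e_i, where t = max(0, max_i -u_i). The origin satisfies all
   inequalities strictly, hence is interior.
   On the torus, x_j df_sigma/dx_j = d (c_j x_j^d - c_0 x^pole), where c_j and
   c_0 are the coefficients kept in f_sigma; so at a critical point either all
   the nonzero vertices lie on the face sigma or none does. In the first case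
   the supporting functional takes its maximum M at each of them; as they sum
   to 0, M = 0 is attained at the origin. In the second case sigma still
   contains a maximising vertex, which can only be the origin. *)

Lemma big_option (T : Type) (idx : T) (op : Monoid.com_law idx) (I : finType)
    (F : option I -> T) :
  \big[op/idx]_o F o = op (F None) (\big[op/idx]_i F (Some i)).
Proof.
rewrite (bigD1 None) //= (reindex_omap Some id) => [|[]//].
by congr (op _ _); apply: eq_bigl => i; rewrite eqxx.
Qed.

Section ConvexHull.
Variables (R : realType) (N : nat).
Implicit Types (s : seq 'rV[R]_N) (u w : 'rV[R]_N).

Lemma dotR_comb (I : finType) (lam : I -> R) (f : I -> 'rV[R]_N) w :
  dotR w (\sum_k lam k *: f k) = \sum_k lam k * dotR w (f k).
Proof.
rewrite /dotR; under eq_bigr do rewrite summxE big_distrr.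
rewrite exchange_big; apply: eq_bigr => k _; rewrite big_distrr.
by apply: eq_bigr => i _; rewrite mxE /= mulrCA.
Qed.

Lemma conv_dot_le s w c u :
  Defs.conv s u -> (forall g, g \in s -> dotR w g <= c) -> dotR w u <= c.
Proof.
move=> [lam [lam_ge0 [lam_sum1 ->]]] s_le; rewrite dotR_comb.
rewrite -[c]mul1r -lam_sum1 mulr_suml; apply: ler_sum => k _.
by rewrite ler_wpM2l // s_le // mem_nth.
Qed.

Lemma conv_combination (I : finType) s (f : I -> 'rV[R]_N) (lam : I -> R) :
  (forall k, f k \in s) -> (forall k, 0 <= lam k) -> \sum_k lam k = 1 ->
  Defs.conv s (\sum_k lam k *: f k).
Proof.
move=> fs lam_ge0 lam_sum1.
have index_lt k : (index (f k) s < size s)%N by rewrite index_mem.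
pose p k := Ordinal (index_lt k).
have nth_p k : s`_(p k) = f k by rewrite nth_index.
exists (fun j => \sum_(k | p k == j) lam k); split; [|split].
- by move=> j; apply: sumr_ge0.
- by rewrite -lam_sum1 (partition_big p xpredT).
- rewrite (partition_big p xpredT) //=; apply: eq_bigr => j _.
  by rewrite scaler_suml; apply: eq_bigr => k /eqP <-; rewrite nth_p.
Qed.

Lemma mem_conv s g : g \in s -> Defs.conv s g.
Proof.
move=> gs; have := @conv_combination 'I_1 s (fun=> g) (fun=> 1).
by rewrite !big_ord1 scale1r; apply.
Qed.

Lemma conv_subconvex (I : finType) s (f : I -> 'rV[R]_N) (mu : I -> R) :
  0 \in s -> (forall k, f k \in s) -> (forall k, 0 <= mu k) ->
  \sum_k mu k <= 1 -> Defs.conv s (\sum_k mu k *: f k).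
Proof.
move=> s0 fs mu_ge0 mu_le1.
pose f' o := if o is Some k then f k else 0.
pose lam o := if o is Some k then mu k else 1 - \sum_k mu k.
have -> : \sum_k mu k *: f k = \sum_o lam o *: f' o.
  by rewrite big_option /= scaler0 add0r.
apply: conv_combination => [[k|]|[k|]|] //=; first by rewrite subr_ge0.
by rewrite big_option /= subrK.
Qed.

Lemma conv_argmax (x : 'rV[R]_N) s w :
  exists2 g, g \in x :: s & forall v, Defs.conv (x :: s) v -> dotR w v <= dotR w g.
Proof.
have [k _ k_max] := @arg_maxP _ _ 'I_(size (x :: s)) ord0 xpredT
  (fun k => dotR w (x :: s)`_k) isT.
exists (x :: s)`_k; first exact: mem_nth.
move=> v /conv_dot_le; apply=> g /(nthP 0)[j j_lt <-].
exact: (k_max (Ordinal j_lt)).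
Qed.

Lemma dotR_const1 u : dotR (const_mx 1) u = \sum_i u ord0 i.
Proof. by apply: eq_bigr => i _; rewrite mxE mul1r. Qed.

Lemma dotR_facet (c : R) j u :
  dotR (const_mx 1 - c *: delta_mx 0 j) u = \sum_i u ord0 i - c * u ord0 j.
Proof.
rewrite /dotR; under eq_bigr do rewrite !mxE mulrBl mul1r.
rewrite sumrB; congr (_ - _); rewrite (bigD1 j) //= eqxx mulr1 big1 ?addr0 //.
by move=> i /negbTE ->; rewrite mulr0 mul0r.
Qed.

End ConvexHull.

Section Monomials.
Variables (R : realType) (N : nat).
Implicit Types (tau : expo N) (z : 'rV[R[i]]_N).

Lemma mono_neq0 tau z : (forall i, z ord0 i != 0) -> mono tau z != 0.
Proof. by move=> z_neq0; apply/prodf_neq0 => i _; apply: expfz_neq0. Qed.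

Lemma mono_subunit tau (j : 'I_N) z : (forall i, z ord0 i != 0) ->
  mono (tau - Defs.unitE j) z = mono tau z / z ord0 j.
Proof.
move=> z_neq0; rewrite /mono.
under eq_bigr => i _ do rewrite !mxE -[_ - _]/(_ + - _) expfzDr // -mulNrn.
rewrite big_split /=; congr (_ * _).
rewrite (bigD1 j) //= eqxx mulr1n exprN1 big1 ?mulr1 // => i ij.
by rewrite (negbTE ij) mulr0n expr0z.
Qed.

Lemma mul_dpartial (g : laurent R N) j z : (forall i, z ord0 i != 0) ->
  z ord0 j * dpartial g j z =
  \sum_(tau <- undup (lsupp g)) lcoef g tau * (tau ord0 j)%:~R * mono tau z.
Proof.
move=> z_neq0; rewrite /dpartial big_distrr; apply: eq_bigr => tau _.
by rewrite mono_subunit //=; field; apply: z_neq0.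
Qed.

Lemma lrestr_coef_neq0 (g : laurent R N) sigma tau :
  (lrestr_coef g sigma tau != 0) = `[< sigma (toR R tau) >] && (lcoef g tau != 0).
Proof. by rewrite /lrestr_coef; case: ifP; rewrite ?eqxx. Qed.

End Monomials.

Section Fa.
Variables (R : realType) (N d : nat) (a : R[i]).
Hypotheses (d_gt0 : (0 < d)%N) (a_neq0 : a != 0).

Definition fa_pole : expo N := const_mx (- d%:Z).
Definition fa_axis (i : 'I_N) : expo N := d%:Z *: Defs.unitE i.
Definition fa_exps : seq (expo N) := fa_pole :: [seq fa_axis i | i <- enum 'I_N].

Lemma fa_axisE i j : fa_axis i ord0 j = d%:Z * (i == j)%:R.
Proof. by rewrite !mxE eqxx eq_sym. Qed.

Lemma fa_axis_inj : injective fa_axis.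
Proof.
move=> i j /matrixP /(_ ord0 i); rewrite !fa_axisE eqxx mulr1.
by case: eqVneq => // _ /eqP; rewrite mulr0 eqz_nat eqn0Ngt d_gt0.
Qed.

Lemma fa_pole_neq_axis i : fa_pole != fa_axis i.
Proof.
apply/eqP => /matrixP /(_ ord0 i); rewrite fa_axisE !mxE eqxx mulr1 => /eqP.
by rewrite eq_sym -subr_eq0 opprK -PoszD eqz_nat addn_eq0 eqn0Ngt d_gt0.
Qed.

Lemma uniq_fa_exps : uniq fa_exps.
Proof.
rewrite /= (map_inj_uniq fa_axis_inj) enum_uniq andbT.
by apply/mapP => -[i _ /eqP]; apply/negP; exact: fa_pole_neq_axis.
Qed.

Lemma fa_coef_pole : @fa_coef R N.+1 d a fa_pole = a.
Proof.
by rewrite /fa_coef eqxx big1 ?addr0 // => i _; rewrite (negbTE (fa_pole_neq_axis i)).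
Qed.

Lemma fa_coef_axis j : @fa_coef R N.+1 d a (fa_axis j) = 1.
Proof.
rewrite /fa_coef eq_sym (negbTE (fa_pole_neq_axis j)) add0r (bigD1 j) //= eqxx.
by rewrite big1 ?addr0 // => i /negbTE ij; rewrite (inj_eq fa_axis_inj) eq_sym ij.
Qed.

Lemma Supp_fa : Supp (fa N.+1 d a) = fa_exps.
Proof.
rewrite /Supp (undup_id uniq_fa_exps); apply/all_filterP/allP => tau.
rewrite inE => /predU1P[->|/mapP[i _ ->]] /=.
  by rewrite fa_coef_pole.
by rewrite fa_coef_axis oner_neq0.
Qed.

Lemma toR_fa_poleE j : toR R fa_pole ord0 j = - d%:R.
Proof. by rewrite !mxE intrN. Qed.

Lemma toR_fa_axisE i j : toR R (fa_axis i) ord0 j = d%:R * (i == j)%:R.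
Proof. by rewrite mxE fa_axisE intrM natz. Qed.

Lemma sum_toR_fa_pole : \sum_j toR R fa_pole ord0 j = - (N%:R * d%:R).
Proof.
under eq_bigr do rewrite toR_fa_poleE.
by rewrite sumr_const card_ord mulNrn mulr_natl.
Qed.

Lemma sum_toR_fa_axis i : \sum_j toR R (fa_axis i) ord0 j = d%:R.
Proof.
under eq_bigr do rewrite toR_fa_axisE.
rewrite (bigD1 i) //= eqxx mulr1 big1 ?addr0 // => j ji.
by rewrite eq_sym (negbTE ji) mulr0.
Qed.

Definition fa_vertices : seq 'rV[R]_N := 0 :: [seq toR R tau | tau <- fa_exps].

Lemma Newton_fa_conv : Newton (fa N.+1 d a) = Defs.conv fa_vertices.
Proof. by rewrite /Newton Supp_fa. Qed.

Definition fa_polytope : set 'rV[R]_N :=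
  [set u | \sum_i u ord0 i <= d%:R /\
           forall j, \sum_i u ord0 i - N.+1%:R * u ord0 j <= d%:R].

Lemma fa_vertices_in_polytope g : g \in fa_vertices -> fa_polytope g.
Proof.
have d_ge0 : 0 <= d%:R :> R := ler0n _ _.
have N_ge0 : 0 <= N%:R :> R := ler0n _ _.
rewrite inE => /predU1P[->|]; last rewrite inE => /predU1P[->|].
- by split=> [|j]; rewrite big1 ?mxE ?mulr0 ?subr0 // => i _; rewrite mxE.
- split=> [|j]; rewrite sum_toR_fa_pole; last rewrite toR_fa_poleE -natr1; nra.
- move=> /mapP[_ /mapP[i _ ->] ->]; split=> [|j]; rewrite sum_toR_fa_axis //.
  by rewrite toR_fa_axisE lerBlDr lerDl !mulr_ge0.
Qed.

Lemma conv_fa_vertices_sub_polytope : Defs.conv fa_vertices `<=` fa_polytope.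
Proof.
move=> u u_conv; split=> [|j].
- rewrite -dotR_const1; apply: (conv_dot_le u_conv) => g.
  by move=> /fa_vertices_in_polytope[+ _]; rewrite dotR_const1.
- rewrite -dotR_facet; apply: (conv_dot_le u_conv) => g.
  by move=> /fa_vertices_in_polytope[_ /(_ j)]; rewrite dotR_facet.
Qed.

Lemma fa_polytope_sub_conv : fa_polytope `<=` Defs.conv fa_vertices.
Proof.
move=> u [sum_le facet_le].
have d_gt0R : 0 < d%:R :> R by rewrite ltr0n.
pose t := \big[Num.max/0]_j (- u ord0 j).
have t_ge0 : 0 <= t := bigmax_ge_id _ _ _ _.
have ut_ge0 j : 0 <= u ord0 j + t.
  by have : - u ord0 j <= t := le_bigmax _ _ _; lra.
have mt_le : N.+1%:R * t <= d%:R - \sum_i u ord0 i.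
  rewrite mulrC -ler_pdivlMr ?ltr0n //; apply: bigmax_le => [|j _].
    by rewrite divr_ge0 ?subr_ge0.
  by rewrite ler_pdivlMr ?ltr0n //; have := facet_le j; lra.
pose f o := if o is Some i then toR R (fa_axis i) else toR R fa_pole.
pose mu o := (if o is Some i then u ord0 i + t else t) / d%:R.
have -> : u = \sum_o mu o *: f o.
  apply/rowP => j; rewrite summxE big_option; under eq_bigr do rewrite mxE toR_fa_axisE.
  rewrite /= mxE toR_fa_poleE (bigD1 j) //= eqxx big1 => [|i ij]; last first.
    by rewrite (negbTE ij) !mulr0.
  by rewrite /mu /=; field; rewrite pnatr_eq0 -lt0n.
apply: conv_subconvex => [|[i|]|[i|]|] /=.
- exact: mem_head.
- by rewrite !inE map_f ?orbT // map_f ?mem_enum.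
- by rewrite !inE eqxx orbT.
- exact: divr_ge0 (ut_ge0 i) (ltW d_gt0R).
- exact: divr_ge0 t_ge0 (ltW d_gt0R).
- rewrite big_option /= -mulr_suml -mulrDl ler_pdivrMr // mul1r.
  rewrite big_split /= sumr_const card_ord -mulr_natl.
  by move: mt_le; rewrite -natr1; lra.
Qed.

Lemma Newton_fa : Newton (fa N.+1 d a) = fa_polytope.
Proof.
rewrite Newton_fa_conv; apply/seteqP; split.
- exact: conv_fa_vertices_sub_polytope.
- exact: fa_polytope_sub_conv.
Qed.

Lemma convenient_fa : convenient (fa N.+1 d a).
Proof.
rewrite /convenient Newton_fa /interior.
pose e : R := (2 * N.+1)%:R^-1.
have e_gt0 : 0 < e by rewrite invr_gt0 ltr0n muln_gt0.
have e_def : (2 * N.+1)%:R * e = 1 by rewrite mulfV // pnatr_eq0 muln_eq0.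
rewrite natrM -natr1 in e_def.
have d_ge1 : 1 <= d%:R :> R by rewrite ler1n.
apply: (@filterS _ _ _ (ball (0 : 'rV[R]_N) e)); last exact: nbhsx_ballx.
move=> y [_ y_lt].
have y_bd j : - e < y ord0 j < e.
  by rewrite -ltr_norml; move: (y_lt ord0 j); rewrite /ball /= !mxE sub0r normrN.
have sum_le : \sum_i y ord0 i <= N%:R * e.
  have -> : N%:R * e = \sum_(i < N) e by rewrite sumr_const card_ord mulr_natl.
  by apply: ler_sum => i _; have /andP[_ /ltW] := y_bd i.
split=> [|j]; first lra.
have /andP[yj_gt _] := y_bd j.
have := ler_wpM2l (ler0n R N.+1) (ltW yj_gt); rewrite -natr1; lra.
Qed.

Lemma mul_dpartial_lrestr_fa sigma j (z : 'rV[R[i]]_N) :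
  (forall i, z ord0 i != 0) ->
  z ord0 j * dpartial (lrestr (fa N.+1 d a) sigma) j z =
  d%:R * (lrestr_coef (fa N.+1 d a) sigma (fa_axis j) * mono (fa_axis j) z
          - lrestr_coef (fa N.+1 d a) sigma fa_pole * mono fa_pole z).
Proof.
move=> z_neq0; rewrite mul_dpartial // [lsupp _]/= (undup_id uniq_fa_exps).
rewrite big_cons big_map big_enum /= (bigD1 j) //= big1 ?addr0 => [|i ij]; last first.
  by rewrite fa_axisE (negbTE ij) mulr0 mulr0 mul0r.
by rewrite fa_axisE eqxx mulr1 mxE intrN; ring.
Qed.

Lemma lrestr_fa_critical sigma z j :
  torus_critical (lrestr (fa N.+1 d a) sigma) z ->
  `[< sigma (toR R (fa_axis j)) >] = `[< sigma (toR R fa_pole) >].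
Proof.
move=> [z_neq0 crit].
have := mul_dpartial_lrestr_fa sigma j z_neq0; rewrite crit mulr0 => /esym/eqP.
rewrite mulf_eq0 pnatr_eq0 eqn0Ngt d_gt0 /= subr_eq0 => /eqP terms_eq.
have termE tau c : @fa_coef R N.+1 d a tau = c -> c != 0 ->
    `[< sigma (toR R tau) >] = (lrestr_coef (fa N.+1 d a) sigma tau * mono tau z != 0).
  move=> tau_c c_neq0.
  by rewrite mulf_eq0 negb_or mono_neq0 // andbT lrestr_coef_neq0 /= tau_c c_neq0 andbT.
rewrite (termE _ 1) ?fa_coef_axis ?oner_neq0 //.
by rewrite (termE _ a) ?fa_coef_pole // terms_eq.
Qed.

Lemma dotR_fa_pole_axes w :
  dotR w (toR R fa_pole) + \sum_j dotR w (toR R (fa_axis j)) = 0.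
Proof.
have dot_axis j : dotR w (toR R (fa_axis j)) = w ord0 j * d%:R.
  rewrite /dotR (bigD1 j) //= toR_fa_axisE eqxx mulr1 big1 ?addr0 // => i ij.
  by rewrite toR_fa_axisE eq_sym (negbTE ij) !mulr0.
rewrite /dotR -big_split big1 // => i _.
by rewrite -/(dotR _ _) dot_axis toR_fa_poleE mulrN /= addNr.
Qed.

Lemma nondegenerate_fa : nondegenerateN (fa N.+1 d a).
Proof.
move=> sigma [w sigmaE] sigma_not0 [z /lrestr_fa_critical axisE].
rewrite Newton_fa_conv in sigmaE.
have sigma_le u v : sigma u -> Defs.conv fa_vertices v -> dotR w v <= dotR w u.
  by rewrite sigmaE => -[_]; apply.
case: (asboolP (sigma (toR R fa_pole))) => [pole_in | pole_out].
  apply: sigma_not0; rewrite sigmaE; split=> [|v v_conv]; first exact/mem_conv/mem_head.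
  have axis_in j : sigma (toR R (fa_axis j)) by apply/asboolP; rewrite axisE; apply/asboolP.
  have : N.+1%:R * dotR w v <= 0.
    rewrite -(dotR_fa_pole_axes w) -natr1 mulrDl mul1r addrC mulr_natl.
    have -> : dotR w v *+ N = \sum_(j < N) dotR w v by rewrite sumr_const card_ord.
    by apply: lerD; [exact: sigma_le | apply: ler_sum => j _; exact: sigma_le].
  rewrite pmulr_rle0 ?ltr0n // => /le_trans; apply.
  by rewrite /dotR big1 // => i _; rewrite mxE mulr0.
have [g g_in g_max] := conv_argmax 0 [seq toR R tau | tau <- fa_exps] w.
have sigma_g : sigma g by rewrite sigmaE; split=> //; exact: mem_conv.
move: g_in; rewrite inE => /predU1P[g0|]; first by apply: sigma_not0; rewrite -g0.
rewrite inE => /predU1P[g_pole|/mapP[_ /mapP[i _ ->] g_axis]].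
  by apply: pole_out; rewrite -g_pole.
by apply: pole_out; apply/asboolP; rewrite -(axisE i); apply/asboolP; rewrite -g_axis.
Qed.

End Fa.

Theorem lemma2p5 (R : realType) (n d : nat) (a : complex R) :
  (0 < n)%N -> (1 <= d)%N -> a != 0 ->
  [/\ convenient (fa n d a),
      Newton (fa n d a) =
        [set u : 'rV[R]_(n.-1) |
           \sum_(i < n.-1) u ord0 i <= d%:R /\
           forall i0 : 'I_(n.-1),
             \sum_(i < n.-1) u ord0 i - n%:R * u ord0 i0 <= d%:R]
    & nondegenerateN (fa n d a)].
Proof.
case: n => // N _ d_gt0 a_neq0; split.
- exact: convenient_fa.
- exact: Newton_fa.
- exact: nondegenerate_fa.
Qed.
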